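(* Let $a\ge a_0$. If $(DFE_a)$ admits a solution on $\mathbf V$, then there is a cycle $\xi$ in $\mathbf X$ with $\sigma_a(\xi)=0$.
   Context: Network $\Gamma$ with finite arcs $\mathcal E$ closed under inversion, vertices $\mathbf V$, connected; Hamiltonians $H_\gamma$ continuous, coercive, quasiconvex with $\mathrm{Int}\{H_\gamma(s,\cdot)\le b\}=\{H_\gamma(s,\cdot)<b\}$, $H_{\tilde\gamma}(s,p)=H_\gamma(1-s,-p)$; $a_0$ = max of $\max_s\min_pH_\gamma$ over non-closed arcs and of $c_\gamma$ (least level admitting a periodic viscosity subsolution) over closed arcs. Graph $\mathbf X=(\mathbf V,\mathbf E)$, bijection $\Psi:\mathbf E\to\mathcal E$, $\mathrm o(e)=\Psi(e)(0)$, $\mathrm t(e)=\Psi(e)(1)$, $-e=\Psi^{-1}(\widetilde{\Psi(e)})$, $\mathbf E_x=\{e:\mathrm o(e)=x\}$, $\sigma_a(e)=\int_0^1\max\{p:H_{\Psi(e)}(t,p)=a\}dt$. Cycle: $\xi=(e_1,\dots,e_M)$, $M\ge1$, $\mathrm t(e_j)=\mathrm o(e_{j+1})$, $\mathrm t(e_M)=\mathrm o(e_1)$; $\sigma_a(\xi)=\sum\sigma_a(e_i)$. $(DFE_a)$: $u(x)=\min_{e\in\mathbf E_x}(u(\mathrm t(e))+\sigma_a(-e))$ for all $x\in\mathbf V$. *)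

From mathcomp Require Import all_boot.
From Stdlib Require Import Reals ClassicalEpsilon.
Set Implicit Arguments. Unset Strict Implicit. Unset Printing Implicit Defensive.
Open Scope R_scope.

Definition IsMaxR (P : R -> Prop) (m : R) : Prop := P m /\ forall x, P x -> x <= m.
Definition IsMinR (P : R -> Prop) (m : R) : Prop := P m /\ forall x, P x -> m <= x.

Definition in01 (s : R) : Prop := 0 <= s <= 1.

Definition ham_continuous (H : R -> R -> R) : Prop :=
  forall s p, in01 s -> forall eps, 0 < eps -> exists delta, 0 < delta /\
    forall s' p', in01 s' -> Rabs (s' - s) < delta -> Rabs (p' - p) < delta ->
      Rabs (H s' p' - H s p) < eps.

Definition ham_coercive (H : R -> R -> R) : Prop :=
  forall M, exists R0, forall s p, in01 s -> R0 < Rabs p -> M < H s p.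

Definition ham_quasiconvex (H : R -> R -> R) : Prop :=
  forall s p q l, in01 s -> 0 <= l <= 1 ->
    H s (l * p + (1 - l) * q) <= Rmax (H s p) (H s q).

(* Int {H(s,.) <= b} = {H(s,.) < b} *)
Definition ham_int_cond (H : R -> R -> R) : Prop :=
  forall s b p, in01 s ->
    ((exists delta, 0 < delta /\ forall q, Rabs (q - p) < delta -> H s q <= b)
     <-> H s p < b).

Definition C1 (phi : R -> R) : Prop :=
  exists dphi : R -> R, (forall x, derivable_pt_lim phi x (dphi x)) /\ continuity dphi.

Definition visc_subsol (H : R -> R -> R) (c : R) (u : R -> R) : Prop :=
  forall s, 0 < s < 1 ->
  forall phi dphi, (forall x, derivable_pt_lim phi x (dphi x)) -> continuity dphi ->
    (exists r, 0 < r /\ forall y, 0 < y < 1 -> Rabs (y - s) < r ->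
        u y - phi y <= u s - phi s) ->
    H s (dphi s) <= c.

Definition u_continuous01 (u : R -> R) : Prop :=
  forall s, in01 s -> forall eps, 0 < eps -> exists delta, 0 < delta /\
    forall s', in01 s' -> Rabs (s' - s) < delta -> Rabs (u s' - u s) < eps.

Definition admits_periodic_subsol (H : R -> R -> R) (c : R) : Prop :=
  exists u : R -> R, u_continuous01 u /\ u 0 = u 1 /\ visc_subsol H c u.

Definition is_crit_value (H : R -> R -> R) (c : R) : Prop :=
  IsMinR (admits_periodic_subsol H) c.

Definition is_maxmin (H : R -> R -> R) (v : R) : Prop :=
  IsMaxR (fun w => exists s, in01 s /\ IsMinR (fun z => exists p, z = H s p) w) v.

(* max { p : H(t,p) = a } (chosen by Hilbert's epsilon; it exists for a >= a_0) *)
Definition maxp (H : R -> R -> R) (a t : R) : R :=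
  epsilon (inhabits 0) (fun m => IsMaxR (fun p => H t p = a) m).

(* Riemann integral over [0,1] (the value does not depend on the proof of
   integrability; 0 is a junk value for non-integrable functions) *)
Definition int01 (f : R -> R) : R :=
  epsilon (inhabits 0) (fun v => exists pr : Riemann_integrable f 0 1, RiemannInt pr = v).

Definition sigma_arc (H : R -> R -> R) (a : R) : R := int01 (fun t => maxp H a t).

Definition sigma_seq (E : Type) (sig : E -> R) (xi : seq E) : R :=
  \big[Rplus/0]_(e <- xi) sig e.

Definition is_graph_cycle (V E : finType) (org tgt : E -> V) (xi : seq E) : Prop :=
  leq 1 (size xi) /\ cycle (fun e f => tgt e == org f) xi.

Definition adj (V E : finType) (org tgt : E -> V) : rel V :=
  fun x y => [exists e, (org e == x) && (tgt e == y)].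

Definition DFE (V E : finType) (org tgt : E -> V) (rev : E -> E) (sig : E -> R)
  (u : V -> R) : Prop :=
  forall x, IsMinR (fun v => exists e, org e = x /\ v = u (tgt e) + sig (rev e)) (u x).

(* Each vertex x has an arc e from x realising the minimum in (DFE_a), so that
   u(x) = u(t(e)) + sigma_a(-e).  Following these arcs from any vertex of the
   finite graph eventually returns to a vertex already visited; along the closed
   orbit so obtained the increments of u telescope to 0, and the inverted arcs,
   read backwards, form a cycle of total sigma_a equal to 0. *)
From mathcomp Require Import all_boot.
From Stdlib Require Import Reals ClassicalEpsilon Lra.
Set Implicit Arguments. Unset Strict Implicit. Unset Printing Implicit Defensive.
Open Scope R_scope.

Lemma sigma_seq_rcons (E : Type) (sig : E -> R) s x :
  sigma_seq sig (rcons s x) = sigma_seq sig s + sig x.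
Proof.
rewrite /sigma_seq; elim: s => [|y s IHs] /=; rewrite !big_cons ?big_nil; lra.
Qed.

Lemma sigma_seq_rev (E : Type) (sig : E -> R) s :
  sigma_seq sig (rev s) = sigma_seq sig s.
Proof.
elim: s => [|y s IHs] //.
by rewrite rev_cons sigma_seq_rcons IHs /sigma_seq big_cons Rplus_comm.
Qed.

Lemma sigma_seq_map (E F : Type) (sig : F -> R) (h : E -> F) s :
  sigma_seq sig (map h s) = sigma_seq (fun e => sig (h e)) s.
Proof. exact: big_map. Qed.

Lemma sigma_seq_traject_telescope (T : Type) (f : T -> T) (u c : T -> R) :
  (forall x, u x = u (f x) + c x) ->
  forall n x, sigma_seq c (traject f x n) = u x - u (iter n f x).
Proof.
move=> Hstep; elim=> [|n IHn] x; first by rewrite /sigma_seq big_nil /=; lra.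
by rewrite trajectS /sigma_seq big_cons -/(sigma_seq _ _) IHn iterSr (Hstep x); lra.
Qed.

Lemma exists_periodic_point (T : finType) (f : T -> T) (x : T) :
  exists (y : T) (n : nat), (0 < n)%nat /\ iter n f y = y.
Proof.
have /trajectP[i lt_i_ord Hi] := looping_order f x.
exists (iter i f x), (order f x - i)%nat; split; first by rewrite subn_gt0.
by rewrite -iterD subnK ?Hi // ltnW.
Qed.

Lemma fcycle_traject_periodic (T : eqType) (f : T -> T) (y : T) n :
  iter n f y = y -> fcycle f (traject f y n).
Proof.
case: n => [|m] // Hper.
rewrite trajectS /=.
have -> : rcons (traject f (f y) m) y = traject f (f y) m.+1.
  by rewrite trajectSr -iterSr Hper.
exact: fpath_traject.
Qed.

Section DescentCycle.

Variables (V E : finType) (org tgt : E -> V) (inv : E -> E).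
Hypothesis org_inv : forall e, org (inv e) = tgt e.
Hypothesis tgt_inv : forall e, tgt (inv e) = org e.
Variable g : V -> E.
Hypothesis org_g : forall x, org (g x) = x.

(* The arcs [inv (g x)] run against the orbit of [tgt \o g], hence the reversal. *)
Lemma graph_cycle_of_orbit s :
  (0 < size s)%nat -> fcycle (fun x => tgt (g x)) s ->
  is_graph_cycle org tgt (rev (map (fun x => inv (g x)) s)).
Proof.
move=> s_gt0 Hcyc; split; first by rewrite size_rev size_map.
rewrite rev_cycle cycle_map; apply: etrans Hcyc; apply: eq_cycle => x y /=.
by rewrite tgt_inv org_inv org_g eq_sym.
Qed.

End DescentCycle.

Lemma DFE_descent_arcs (V E : finType) (org tgt : E -> V) (rev : E -> E)
    (sig : E -> R) (u : V -> R) :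
  DFE org tgt rev sig u ->
  exists g : V -> E, forall x, org (g x) = x /\ u x = u (tgt (g x)) + sig (rev (g x)).
Proof.
move=> Hu; apply: (choice (fun x e => org e = x /\ u x = u (tgt e) + sig (rev e))) => x.
by case: (Hu x) => [[e [He ->]] _]; exists e.
Qed.

Theorem proposition6p17
  (V E : finType) (org tgt : E -> V) (rev : E -> E)
  (H : E -> R -> R -> R)
  (* the graph X: inversion of arcs *)
  (Hrev_inv : forall e, rev (rev e) = e)
  (Hrev_neq : forall e, rev e <> e)
  (Hrev_org : forall e, org (rev e) = tgt e)
  (* every vertex is an endpoint of an arc, and the network is connected *)
  (Hvert : forall x, exists e, org e = x)
  (Hconn : forall x y, connect (adj org tgt) x y)
  (* the Hamiltonians *)
  (Hcont : forall e, ham_continuous (H e))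
  (Hcoer : forall e, ham_coercive (H e))
  (Hqc : forall e, ham_quasiconvex (H e))
  (Hint : forall e, ham_int_cond (H e))
  (Hsym : forall e s p, in01 s -> H (rev e) s p = H e (1 - s) (- p))
  (* a_0 *)
  (a0 : R)
  (Ha0 : IsMaxR (fun v => exists e,
            (org e <> tgt e /\ is_maxmin (H e) v) \/
            (org e = tgt e /\ is_crit_value (H e) v)) a0)
  (a : R) (Ha : a0 <= a)
  (u : V -> R)
  (Hu : DFE org tgt rev (fun e => sigma_arc (H e) a) u) :
  exists xi : seq E, is_graph_cycle org tgt xi /\
    sigma_seq (fun e => sigma_arc (H e) a) xi = 0.
Proof.
set sig := fun e => sigma_arc (H e) a.
have [g Hg] := DFE_descent_arcs Hu.
have tgt_rev e : tgt (rev e) = org e by rewrite -[in RHS](Hrev_inv e) Hrev_org.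
(* [Ha0] is used only to know that the graph has a vertex. *)
have [[e0 _] _] := Ha0.
have [y [n [n_gt0 Hper]]] := exists_periodic_point (fun x => tgt (g x)) (org e0).
exists (seq.rev (map (fun x => rev (g x)) (traject (fun x => tgt (g x)) y n))).
split.
  apply: graph_cycle_of_orbit => //; first by move=> x; case: (Hg x).
    by rewrite size_traject.
  exact: fcycle_traject_periodic.
rewrite sigma_seq_rev sigma_seq_map.
rewrite (sigma_seq_traject_telescope (u := u)) ?Hper; first lra.
by move=> x; case: (Hg x).
Qed.
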